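(* Let $H$ be a complex Hilbert space and let $U_0(H)$ be the set of unitary operators on $H$ which fix each element of the orthogonal complement of some finite-dimensional subspace of $H$. Then $d(u,v) := \mathrm{rank}(u - v)$ defines a distance on $U_0(H)$ with values in the nonnegative integers. Moreover, if $F \subset E$ are finite-dimensional subspaces of $H$ and $u$ is a unitary operator fixing each element of $E^{\perp}$, then $\pi_{E,F}(u)$ is the unique unitary operator fixing each element of $F^{\perp}$ for which $d(u, \pi_{E,F}(u))$ is minimal (among unitary operators fixing each element of $F^\perp$); the image of $H$ by $u - \pi_{E,F}(u)$ equals the image of $F^{\perp}$ by $u - \mathrm{Id}$; and $$d(u, \pi_{E,F}(u)) = \dim(E) - \dim(F) - \dim(\{x \in E \cap F^{\perp} : u(x) = x\}).$$ In particular, if no nonzero $x \in E\cap F^\perp$ satisfies $u(x)=x$, then $d(u,\pi_{E,F}(u)) = \dim(E) - \dim(F)$.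
   Context: For a complex Hilbert space $H$, a finite-dimensional subspace $E$, a subspace $F\subset E$ and a unitary $u$ on $H$ fixing each element of $E^\perp$, $\pi_{E,F}(u)$ denotes the unique unitary operator on $H$ which fixes each element of $F^\perp$ and such that the image of $H$ by $u-\pi_{E,F}(u)$ is included in the image of $F^\perp$ by $u-\mathrm{Id}$ (existence and uniqueness are known). *)

From mathcomp Require Import all_boot all_algebra.
From mathcomp Require Import boolp classical_sets reals.
From mathcomp Require Import complex.
From Stdlib Require Import ClassicalEpsilon.
Set Implicit Arguments. Unset Strict Implicit. Unset Printing Implicit Defensive.
Import GRing.Theory Num.Theory.
Local Open Scope ring_scope.
Local Open Scope classical_set_scope.

Section Hilbert.
Variables (R : realType) (V : lmodType R[i]) (ip : V -> V -> R[i]).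

Definition cauchy_seq (s : nat -> V) : Prop :=
  forall e : R[i], 0 < e -> exists N : nat, forall m n : nat,
    (N <= m)%N -> (N <= n)%N -> ip (s m - s n) (s m - s n) < e.

Definition converges_to (s : nat -> V) (l : V) : Prop :=
  forall e : R[i], 0 < e -> exists N : nat, forall n : nat,
    (N <= n)%N -> ip (s n - l) (s n - l) < e.

Definition hilbert_space : Prop :=
  [/\ (forall (a : R[i]) (x y z : V), ip (a *: x + y) z = a * ip x z + ip y z),
      (forall x y : V, ip y x = (ip x y)^*),
      (forall x : V, 0 <= ip x x),
      (forall x : V, ip x x = 0 -> x = 0) &
      (forall s : nat -> V, cauchy_seq s -> exists l, converges_to s l)].

Definition subspace (S : set V) : Prop :=
  S 0 /\ forall (a : R[i]) (x y : V), S x -> S y -> S (a *: x + y).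

Definition has_dim (S : set V) (n : nat) : Prop :=
  exists b : 'I_n -> V,
    [/\ (forall i, S (b i)),
        (forall c : 'I_n -> R[i], \sum_(i < n) c i *: b i = 0 -> forall i, c i = 0) &
        (forall x, S x -> exists c : 'I_n -> R[i], x = \sum_(i < n) c i *: b i)].

Definition findim (S : set V) : Prop := exists n, has_dim S n.

(* the dimension of a finite-dimensional subspace (junk value 0 otherwise) *)
Definition sdim (S : set V) : nat := xget 0%N (has_dim S).

Definition orth (S : set V) : set V := [set x | forall y, S y -> ip x y = 0].

Definition fixes (u : V -> V) (S : set V) : Prop := forall x, S x -> u x = x.

Definition unitary (u : V -> V) : Prop :=
  [/\ (forall (a : R[i]) (x y : V), u (a *: x + y) = a *: u x + u y),
      (forall x y, ip (u x) (u y) = ip x y) &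
      (forall y, exists x, u x = y)].

Definition U0 : set (V -> V) :=
  [set u | unitary u /\ exists E, [/\ subspace E, findim E & fixes u (orth E)]].

Definition op_rank (w : V -> V) : nat := sdim (range w).

Definition dist (u v : V -> V) : nat := op_rank (fun x => u x - v x).

(* pi_{E,F}(u): the unitary operator fixing F^perp such that
   (u - pi_{E,F}(u))(H) is included in (u - Id)(F^perp) (unique, known to exist). *)
Definition is_piEF (E F : set V) (u w : V -> V) : Prop :=
  [/\ unitary w, fixes w (orth F) &
      range (fun x => u x - w x) `<=` (fun x => u x - x) @` (orth F)].

Definition piEF (E F : set V) (u : V -> V) : V -> V :=
  epsilon (inhabits (fun x : V => x)) (is_piEF E F u).

End Hilbert.

From mathcomp Require Import all_boot all_algebra.
From mathcomp Require Import boolp classical_sets reals.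
From mathcomp Require Import complex.
From mathcomp Require Import ring.
From Stdlib Require Import ClassicalEpsilon.
Set Implicit Arguments. Unset Strict Implicit. Unset Printing Implicit Defensive.
Import GRing.Theory Num.Theory.
Local Open Scope ring_scope.
Local Open Scope classical_set_scope.

(* Every subspace that occurs is finite-dimensional, so orthogonal projections
   onto it exist without completeness (by solving a Gram system), and of the
   inner product axioms only definiteness is used.

   If u and v fix the orthogonals of E1 and E2, then u - v vanishes on the
   orthogonal of E1 + E2, so its rank is finite; the metric axioms follow by
   counting dimensions.

   Let F be included in E and u fix E^perp; put M = (u - 1)(F^perp),
   G = E /\ F^perp and K = {x in G | u x = x}. As u - 1 vanishes on E^perp, it
   maps G onto M with kernel K, so dim M = dim E - dim F - dim K. Every w fixing
   F^perp has (u - w)(H) containing M, hence d(u, w) >= dim M. As u is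
   isometric, F /\ M = 0, and counting dimensions F + M = E /\ K^perp, which
   contains u(F). Writing u f = a(f) + m(f) along F + M, the map p equal to a on
   F and to the identity on F^perp is unitary with (u - p)(H) = M: it is
   pi_{E,F}(u), and it attains the bound. A w attaining the bound has
   (u - w)(H) = M, which determines w on F because F /\ M = 0. *)

(** * Finite families and dimension *)

Definition fcat (T : Type) n m (f : 'I_n -> T) (g : 'I_m -> T) : 'I_(n + m) -> T :=
  fun i => match split i with inl j => f j | inr j => g j end.

Lemma fcat_lshift (T : Type) n m (f : 'I_n -> T) (g : 'I_m -> T) j :
  fcat f g (lshift m j) = f j.
Proof. by rewrite /fcat (unsplitK (inl j : 'I_n + 'I_m)). Qed.

Lemma fcat_rshift (T : Type) n m (f : 'I_n -> T) (g : 'I_m -> T) j :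
  fcat f g (rshift n j) = g j.
Proof. by rewrite /fcat (unsplitK (inr j : 'I_n + 'I_m)). Qed.

Section Families.
Variables (K : fieldType) (V : lmodType K).

Definition span n (b : 'I_n -> V) : set V :=
  [set x | exists c : 'I_n -> K, x = \sum_(i < n) c i *: b i].

Definition indep n (b : 'I_n -> V) : Prop :=
  forall c : 'I_n -> K, \sum_(i < n) c i *: b i = 0 -> forall i, c i = 0.

Lemma span_mem n (b : 'I_n -> V) i : span b (b i).
Proof.
exists (fun j => (j == i)%:R).
by rewrite (bigD1 i) //= eqxx scale1r big1 ?addr0 // => j /negbTE ->; rewrite scale0r.
Qed.

Lemma sum_fcat n m (b1 : 'I_n -> V) (b2 : 'I_m -> V) (c : 'I_(n + m) -> K) :
  \sum_i c i *: fcat b1 b2 i =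
  \sum_j c (lshift m j) *: b1 j + \sum_j c (rshift n j) *: b2 j.
Proof.
by rewrite big_split_ord; congr (_ + _); apply: eq_bigr => j _;
  rewrite ?fcat_lshift ?fcat_rshift.
Qed.

Lemma span_fcat n m (b1 : 'I_n -> V) (b2 : 'I_m -> V) x y :
  span b1 x -> span b2 y -> span (fcat b1 b2) (x + y).
Proof.
move=> [c1 ->] [c2 ->]; exists (fcat c1 c2); rewrite sum_fcat.
by congr (_ + _); apply: eq_bigr => j _; rewrite ?fcat_lshift ?fcat_rshift.
Qed.

(* Steinitz: for n > m a kernel vector of the n x m coefficient matrix of b in s
   is a dependence among the b j. *)
Lemma indep_span_leq n m (b : 'I_n -> V) (s : 'I_m -> V) :
  indep b -> (forall j, span s (b j)) -> (n <= m)%N.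
Proof.
move=> ib /choice [f hf]; rewrite leqNgt; apply/negP => lt_mn.
pose A := \matrix_(j < n, i < m) f j i.
have : kermx A != 0.
  rewrite kermx_eq0 /row_free; apply/negP => /eqP rkA.
  by move: (rank_leq_col A); rewrite rkA leqNgt lt_mn.
move/rowV0Pn => [v /sub_kermxP vA vn0].
have : \sum_j v 0 j *: b j = 0.
  under eq_bigr => j _ do rewrite hf scaler_sumr.
  rewrite exchange_big /= (eq_bigr (fun i => (v *m A) 0 i *: s i)).
    by rewrite vA big1 // => i _; rewrite mxE scale0r.
  move=> i _; rewrite !mxE scaler_suml; apply: eq_bigr => j _.
  by rewrite scalerA mxE.
move/ib => v0; apply/negP: vn0; rewrite negbK; apply/eqP/matrixP => i j.
by rewrite !mxE (ord1 i) v0.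
Qed.

Lemma indep_fcat1 n (b : 'I_n -> V) x :
  indep b -> ~ span b x -> indep (fcat b (fun _ : 'I_1 => x)).
Proof.
move=> ib nx c; rewrite sum_fcat big_ord1 => hc.
have cx : c (rshift n ord0) = 0.
  apply/eqP; apply/negP => /negP cn; apply: nx.
  exists (fun j => - (c (rshift n ord0))^-1 * c (lshift 1 j)).
  have -> : x = (c (rshift n ord0))^-1 *: (c (rshift n ord0) *: x) by rewrite scalerK.
  have -> : c (rshift n ord0) *: x = - \sum_j c (lshift 1 j) *: b j.
    by apply/eqP; rewrite -addr_eq0 addrC hc.
  rewrite scalerN scaler_sumr -sumrN; apply: eq_bigr => j _.
  by rewrite scalerA mulNr scaleNr.
move: hc; rewrite cx scale0r addr0 => /ib cb i.
by rewrite -(splitK i); case: (split i) => j /=; rewrite ?(ord1 j).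
Qed.

End Families.

Section Linear.
Variables (K : pzRingType) (V : lmodType K).

Definition lin (u : V -> V) := forall (a : K) x y, u (a *: x + y) = a *: u x + u y.

Lemma lin_id : lin id.
Proof. by []. Qed.

Variable u : V -> V.
Hypothesis lu : lin u.

Lemma lin0 : u 0 = 0.
Proof.
have := lu 1 0 0; rewrite !scale1r addr0 => e.
by apply: (addrI (u 0)); rewrite addr0 -e.
Qed.

Lemma linD x y : u (x + y) = u x + u y.
Proof. by have := lu 1 x y; rewrite !scale1r. Qed.

Lemma linZ a x : u (a *: x) = a *: u x.
Proof. by have := lu a x 0; rewrite !addr0 lin0 addr0. Qed.

Lemma linN x : u (- x) = - u x.
Proof. by rewrite -scaleN1r linZ scaleN1r. Qed.

Lemma linB x y : u (x - y) = u x - u y.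
Proof. by rewrite linD linN. Qed.

Lemma lin_sum n (c : 'I_n -> K) (b : 'I_n -> V) :
  u (\sum_i c i *: b i) = \sum_i c i *: u (b i).
Proof. by elim/big_rec2: _ => [|i y1 y2 _ <-]; rewrite ?lin0 ?lu. Qed.

Lemma lin_diff v : lin v -> lin (fun x => u x - v x).
Proof. by move=> lv a x y; rewrite lu lv scalerBr addrACA opprD. Qed.

End Linear.

Section Subspace.
Variables (R : realType) (V : lmodType R[i]).
Implicit Types (S A B : set V) (x y : V) (u v w T : V -> V).

Lemma subspace0 S : subspace S -> S 0.
Proof. by case. Qed.

Lemma subspaceD S x y : subspace S -> S x -> S y -> S (x + y).
Proof. by case=> _ hS ??; rewrite -[x]scale1r; apply: hS. Qed.

Lemma subspaceZ S a x : subspace S -> S x -> S (a *: x).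
Proof. by case=> ? hS ?; rewrite -[_ *: _]addr0; apply: hS. Qed.

Lemma subspaceB S x y : subspace S -> S x -> S y -> S (x - y).
Proof. by move=> hS ??; rewrite -scaleN1r; apply: subspaceD => //; apply: subspaceZ. Qed.

Lemma subspace_sum S n (f : 'I_n -> V) : subspace S -> (forall i, S (f i)) -> S (\sum_i f i).
Proof. by move=> hS hf; apply: big_ind => [|??|i _]; [apply: subspace0|apply: subspaceD|]. Qed.

Lemma subspaceI S A : subspace S -> subspace A -> subspace (S `&` A).
Proof. by move=> [S0 hS] [A0 hA]; split=> // a x y [??] [??]; split; [apply: hS|apply: hA]. Qed.

Lemma span_subspace n (b : 'I_n -> V) : subspace (span b).
Proof.
split; first by exists (fun=> 0); rewrite big1 // => i _; rewrite scale0r.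
move=> a x y [c ->] [d ->]; exists (fun i => a * c i + d i).
by rewrite scaler_sumr -big_split; apply: eq_bigr => i _; rewrite scalerDl scalerA.
Qed.

Lemma span_subset S n (b : 'I_n -> V) : subspace S -> (forall i, S (b i)) -> span b `<=` S.
Proof. by move=> hS hb x [c ->]; apply: subspace_sum => // i; apply: subspaceZ. Qed.

Lemma range_subspace u : lin u -> subspace (range u).
Proof.
move=> lu; split; first by exists 0; rewrite ?lin0.
by move=> a _ _ [x _ <-] [y _ <-]; exists (a *: x + y); rewrite ?lu.
Qed.

Lemma image_subspace u S : lin u -> subspace S -> subspace (u @` S).
Proof.
move=> lu [S0 hS]; split; first by exists 0; rewrite ?lin0.
by move=> a _ _ [x Sx <-] [y Sy <-]; exists (a *: x + y); [exact: hS|exact: lu].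
Qed.

Lemma kernel_subspace u : lin u -> subspace [set x | u x = 0].
Proof.
move=> lu; split=> [|a x y ux uy]; first exact: lin0.
by move: (lu a x y); rewrite ux uy scaler0 addr0.
Qed.

Lemma has_dim0 S : (forall x, S x -> x = 0) -> has_dim S 0.
Proof.
move=> S0; exists (fun=> 0); split; [by case|by move=> c _; case|].
by move=> x /S0 ->; exists (fun=> 0); rewrite big_ord0.
Qed.

Lemma has_dim0_eq0 S x : has_dim S 0 -> S x -> x = 0.
Proof. by move=> [b [_ _ bS]] /bS [c ->]; rewrite big_ord0. Qed.

Lemma has_dim_uniq S n k : has_dim S n -> has_dim S k -> n = k.
Proof.
move=> [b [bS bi bsp]] [d [dS di dsp]]; apply/eqP; rewrite eqn_leq.
by rewrite (indep_span_leq bi (fun j => dsp _ (bS j))) (indep_span_leq di (fun j => bsp _ (dS j))).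
Qed.

Lemma sdim_eq S n : has_dim S n -> sdim S = n.
Proof. by move=> dS; apply: (has_dim_uniq _ dS); apply: xgetPex; exists n. Qed.

Lemma findim_has_dim S : findim S -> has_dim S (sdim S).
Proof. by move=> [n dn]; rewrite (sdim_eq dn). Qed.

Lemma indep_bounded_has_dim S m : subspace S ->
  (forall k (b : 'I_k -> V), indep b -> (forall i, S (b i)) -> (k <= m)%N) ->
  exists2 n, (n <= m)%N & has_dim S n.
Proof.
move=> hS ub.
pose P k := `[< exists b : 'I_k -> V, indep b /\ forall i, S (b i) >].
have P0 : exists k, P k.
  by exists 0%N; apply/asboolP; exists (fun=> 0); split; [move=> c _; case|case].
have Pub k : P k -> (k <= m)%N by move=> /asboolP [b [ib bS]]; apply: ub ib bS.
case: (ex_maxnP P0 Pub) => n Pn Pmax; exists n; first exact: Pub.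
move/asboolP: Pn => [b [ib bS]]; exists b; split => // x Sx.
apply: contrapT => nx.
suff /Pmax : P (n + 1)%N by rewrite addn1 ltnn.
apply/asboolP; exists (fcat b (fun=> x)); split; first exact: indep_fcat1.
by move=> i; rewrite /fcat; case: split.
Qed.

Lemma has_dim_sub_span S m (b : 'I_m -> V) : subspace S -> S `<=` span b ->
  exists2 k, (k <= m)%N & has_dim S k.
Proof.
move=> hS Sb; apply: indep_bounded_has_dim => // k c ic cS.
exact: indep_span_leq ic (fun j => Sb _ (cS j)).
Qed.

Lemma span_has_dim m (c : 'I_m -> V) : exists2 k, (k <= m)%N & has_dim (span c) k.
Proof. exact: has_dim_sub_span (span_subspace c) (fun x cx => cx). Qed.

Lemma has_dim_sub A S m : subspace A -> A `<=` S -> has_dim S m ->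
  exists2 k, (k <= m)%N & has_dim A k.
Proof. by move=> hA AS [b [_ _ bS]]; apply: (has_dim_sub_span (b := b) hA) => x /AS /bS. Qed.

Lemma has_dim_sub_leq A S a m : subspace A -> A `<=` S -> has_dim A a -> has_dim S m ->
  (a <= m)%N.
Proof. by move=> hA AS dA /(has_dim_sub hA AS) [k le_km /(has_dim_uniq dA) ->]. Qed.

Lemma has_dim_indep_span S n (c : 'I_n -> V) : has_dim S n -> indep c ->
  (forall i, S (c i)) -> S `<=` span c.
Proof.
move=> [b [_ _ bS]] ic cS x Sx; apply: contrapT => nx.
suff : (n + 1 <= n)%N by rewrite addn1 ltnn.
apply: (indep_span_leq (indep_fcat1 ic nx) (s := b)) => i.
by apply: bS; rewrite /fcat; case: split.
Qed.

Lemma subspace_eq_dim A S n : subspace A -> A `<=` S ->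
  has_dim S n -> has_dim A n -> A = S.
Proof.
move=> hA AS dS [c [cA ci _]]; apply/seteqP; split => // x.
by move/(has_dim_indep_span dS ci (fun i => AS _ (cA i))); apply: (span_subset hA cA).
Qed.

Lemma has_dim_dsum S A B n m : subspace A -> subspace B -> A `<=` S -> B `<=` S ->
  (forall x, S x -> exists a b, [/\ A a, B b & x = a + b]) ->
  (forall x, A x -> B x -> x = 0) ->
  has_dim A n -> has_dim B m -> has_dim S (n + m).
Proof.
move=> hA hB AS BS dec AB0 [b1 [b1A b1i b1s]] [b2 [b2B b2i b2s]].
exists (fcat b1 b2); split.
- by move=> i; rewrite /fcat; case: split => j; [apply: AS|apply: BS].
- move=> c; rewrite sum_fcat; set a := \sum_(j < n) _; set b := \sum_(j < m) _ => ab0.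
  have Aa : A a by apply: subspace_sum => // j; apply: subspaceZ.
  have Bb : B b by apply: subspace_sum => // j; apply: subspaceZ.
  have a0 : a = 0.
    by apply: AB0 => //; rewrite -[a]opprK (addr0_eq ab0) -scaleN1r; apply: subspaceZ.
  have b0 : b = 0 by rewrite -ab0 a0 add0r.
  by move=> i; rewrite -(splitK i); case: (split i) => j /=; [exact: b1i a0 j|exact: b2i b0 j].
- by move=> x /dec [a [b [Aa Bb ->]]]; apply: span_fcat; [apply: b1s|apply: b2s].
Qed.

Lemma has_dim_rank_nullity T S k r : lin T -> subspace S ->
  has_dim (S `&` [set x | T x = 0]) k -> has_dim (T @` S) r -> has_dim S (k + r).
Proof.
move=> lT hS dN [m [mT mi ms]].
have /choice [g gS] : forall i, exists x, S x /\ T x = m i.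
  by move=> i; have [x Sx <-] := mT i; exists x.
have Tg c : T (\sum_i c i *: g i) = \sum_i c i *: m i.
  by rewrite (lin_sum lT); apply: eq_bigr => i _; rewrite (gS i).2.
have gS' : span g `<=` S by apply: span_subset => // i; apply: (gS i).1.
have dg : has_dim (span g) r.
  exists g; split => [i|c c0|//]; first exact: span_mem.
  by apply: mi; rewrite -Tg c0 lin0.
have NS : S `&` [set x | T x = 0] `<=` S by move=> x [].
apply: (has_dim_dsum (subspaceI hS (kernel_subspace lT)) (span_subspace g) NS gS') => //.
- move=> x Sx; have [c Tx] := ms _ (ex_intro2 _ _ x Sx erefl).
  exists (x - \sum_i c i *: g i), (\sum_i c i *: g i); split; last by rewrite subrK.
  + split; first by apply: subspaceB => //; apply: gS'; exists c.
    by rewrite /= (linB lT) Tg -Tx subrr.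
  + by exists c.
- move=> x [_ /= Tx] [c xE]; move: Tx; rewrite xE Tg => /mi c0.
  by rewrite big1 // => i _; rewrite c0 scale0r.
Qed.

Lemma image_span_sub u n (b : 'I_n -> V) S : lin u -> S `<=` span b ->
  u @` S `<=` span (fun i => u (b i)).
Proof. by move=> lu Sb _ [x /Sb [c ->] <-]; exists c; rewrite (lin_sum lu). Qed.

Lemma dist_sym u v : lin u -> lin v -> dist u v = dist v u.
Proof.
move=> lu lv; rewrite /dist /op_rank; congr sdim.
by apply/seteqP; split => _ [x _ <-]; exists (- x) => //;
  rewrite (linN lu) (linN lv) opprK addrC.
Qed.

End Subspace.

(** * Orthogonal projections *)

Section InnerProduct.
Variables (R : realType) (V : lmodType R[i]) (ip : V -> V -> R[i]).
Implicit Types (S A B : set V) (x y z : V) (u v w T : V -> V).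
Hypothesis ipl : forall (a : R[i]) x y z, ip (a *: x + y) z = a * ip x z + ip y z.
Hypothesis ips : forall x y, ip y x = (ip x y)^*.
Hypothesis ipd : forall x, ip x x = 0 -> x = 0.

Lemma ip0l z : ip 0 z = 0.
Proof.
have := ipl 1 0 0 z; rewrite scale1r addr0 mul1r => e.
by apply: (addrI (ip 0 z)); rewrite addr0 -e.
Qed.

Lemma ipDl x y z : ip (x + y) z = ip x z + ip y z.
Proof. by have := ipl 1 x y z; rewrite scale1r mul1r. Qed.

Lemma ipZl a x z : ip (a *: x) z = a * ip x z.
Proof. by have := ipl a x 0 z; rewrite addr0 ip0l addr0. Qed.

Lemma ipBl x y z : ip (x - y) z = ip x z - ip y z.
Proof. by rewrite ipDl -scaleN1r ipZl mulN1r. Qed.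

Lemma ip0r z : ip z 0 = 0.
Proof. by rewrite ips ip0l conjC0. Qed.

Lemma ipDr x y z : ip z (x + y) = ip z x + ip z y.
Proof. by rewrite [LHS]ips ipDl rmorphD [ip z x]ips [ip z y]ips. Qed.

Lemma ipZr a x z : ip z (a *: x) = a^* * ip z x.
Proof. by rewrite [LHS]ips ipZl rmorphM [ip z x]ips. Qed.

Lemma ipBr x y z : ip z (x - y) = ip z x - ip z y.
Proof. by rewrite [LHS]ips ipBl rmorphB [ip z x]ips [ip z y]ips. Qed.

Lemma ip_suml n (c : 'I_n -> R[i]) (b : 'I_n -> V) z :
  ip (\sum_i c i *: b i) z = \sum_i c i * ip (b i) z.
Proof. by elim/big_rec2: _ => [|i y1 y2 _ <-]; rewrite ?ip0l ?ipl. Qed.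

Lemma ip_sumr n (c : 'I_n -> R[i]) (b : 'I_n -> V) z :
  ip z (\sum_i c i *: b i) = \sum_i (c i)^* * ip z (b i).
Proof. by elim/big_rec2: _ => [|i y1 y2 _ <-]; rewrite ?ip0r ?ipDr ?ipZr. Qed.

Lemma ip_eq0C x y : ip x y = 0 -> ip y x = 0.
Proof. by move=> xy0; rewrite ips xy0 conjC0. Qed.

Lemma orth_subspace S : subspace (orth ip S).
Proof.
split=> [y _|a x y hx hy z Sz]; first exact: ip0l.
by rewrite ipl hx // hy // mulr0 addr0.
Qed.

Lemma orth_meet_eq0 S x : S x -> orth ip S x -> x = 0.
Proof. by move=> Sx /(_ x Sx); apply: ipd. Qed.

(* The coefficients of the projection solve the Gram system, whose matrix is
   invertible because its kernel vectors give combinations orthogonal to themselves. *)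
Lemma orth_proj_span n (b : 'I_n -> V) x : indep b ->
  exists2 y, span b y & orth ip (span b) (x - y).
Proof.
move=> ib; pose M := \matrix_(i < n, j < n) ip (b i) (b j).
have Mu : M \in unitmx.
  rewrite -row_free_unit -kermx_eq0; apply/negP => /negP /rowV0Pn [v /sub_kermxP vM vn0].
  pose y := \sum_i v 0 i *: b i.
  have yb j : ip y (b j) = 0.
    have vMj : (v *m M) 0 j = 0 by rewrite vM mxE.
    rewrite ip_suml; apply: etrans vMj; rewrite mxE.
    by apply: eq_bigr => i _; rewrite mxE.
  have y0 : y = 0 by apply: ipd; rewrite {2}/y ip_sumr big1 // => j _; rewrite yb mulr0.
  by move/negP: vn0; apply; apply/eqP/matrixP => i j; rewrite (ord1 i) mxE (ib _ y0).
pose r := \row_(j < n) ip x (b j); pose c := r *m invmx M.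
have cM : c *m M = r by rewrite /c mulmxKV.
have cMj j : \sum_i c 0 i * ip (b i) (b j) = ip x (b j).
  have := congr1 (fun N : 'M_(_, _) => N 0 j) cM; rewrite /= !mxE => <-.
  by apply: eq_bigr => i _; rewrite ?mxE.
exists (\sum_i c 0 i *: b i); first by exists (c 0).
move=> _ [d ->]; rewrite ip_sumr big1 // => j _.
by rewrite ipBl ip_suml cMj subrr mulr0.
Qed.

Lemma orth_proj S n : subspace S -> has_dim S n -> forall x,
  exists2 y, S y & orth ip S (x - y).
Proof.
move=> hS [b [bS bi bsp]] x.
have -> : S = span b by apply/seteqP; split => //; apply: span_subset.
exact: orth_proj_span.
Qed.

Lemma orth_orth_sub S n : subspace S -> has_dim S n -> orth ip (orth ip S) `<=` S.
Proof.
move=> hS dS x hx; have [y Sy hy] := orth_proj hS dS x.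
suff /eqP : x - y = 0 by rewrite subr_eq0 => /eqP ->.
by apply: ipd; rewrite ipBl (hx _ hy) (ip_eq0C (hy y Sy)) subr0.
Qed.

Lemma has_dim_orth_compl S A s a : subspace S -> subspace A -> A `<=` S ->
  has_dim S s -> has_dim A a -> exists2 b, has_dim (S `&` orth ip A) b & s = (a + b)%N.
Proof.
move=> hS hA AS dS dA.
have hSA : subspace (S `&` orth ip A) by apply: subspaceI => //; apply: orth_subspace.
have SAS : S `&` orth ip A `<=` S by move=> x [].
have [b _ dSA] := has_dim_sub hSA SAS dS.
exists b => //; apply: (has_dim_uniq dS); apply: (has_dim_dsum hA hSA AS SAS) => //.
- move=> x Sx; have [y Ay xy] := orth_proj hA dA x.
  exists y, (x - y); split; rewrite ?subrKC //.
  by split=> //; apply: subspaceB => //; apply: AS.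
- by move=> x Ax [_]; apply: orth_meet_eq0.
Qed.

Lemma unitary_orth_stable S n w x : subspace S -> has_dim S n -> unitary ip w ->
  fixes w (orth ip S) -> S x -> S (w x).
Proof.
move=> hS dS [_ wip _] fw Sx; apply: (orth_orth_sub hS dS) => y Sy.
by rewrite -(fw y Sy) wip; apply: ip_eq0C; apply: Sy.
Qed.

(* [a_i = u f_i - u g_i + g_i]; the terms coupling [F] and [orth ip F] vanish. *)
Lemma ip_isometry_correction (u : V -> V) (F : set V) f1 f2 a1 a2 g1 g2 :
  (forall x y, ip (u x) (u y) = ip x y) ->
  F f1 -> F f2 -> F a1 -> F a2 -> orth ip F g1 -> orth ip F g2 ->
  u f1 - a1 = u g1 - g1 -> u f2 - a2 = u g2 - g2 -> ip a1 a2 = ip f1 f2.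
Proof.
move=> uip Ff1 Ff2 Fa1 Fa2 og1 og2 e1 e2.
have a1E : a1 = u f1 - (u g1 - g1) by rewrite -e1 opprB addrC subrK.
have a2E : a2 = u f2 - (u g2 - g2) by rewrite -e2 opprB addrC subrK.
have g1a2 : ip g1 (u f2) = ip g1 (u g2) - ip g1 g2.
  by have := og1 _ Fa2; rewrite a2E !ipBr => /eqP; rewrite subr_eq0 => /eqP.
have a1g2 : ip (u f1) g2 = ip (u g1) g2 - ip g1 g2.
  by have := ip_eq0C (og2 _ Fa1); rewrite a1E !ipBl => /eqP; rewrite subr_eq0 => /eqP.
rewrite a1E a2E !(ipBl, ipBr) !uip g1a2 a1g2 (og1 _ Ff2) (ip_eq0C (og2 _ Ff1)).
by ring.
Qed.

(** * The rank distance on U_0(H) *)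

Lemma range_has_dim_span m (c : 'I_m -> V) T : lin T ->
  (forall x, orth ip (span c) x -> T x = 0) ->
  exists2 k, (k <= m)%N & has_dim (range T) k.
Proof.
move=> lT T0; apply: (has_dim_sub_span (b := fun i => T (c i))); first exact: range_subspace.
have [k _ dk] := span_has_dim c.
move=> _ [x _ <-]; have [y cy xy] := orth_proj (span_subspace c) dk x.
have -> : T x = T y by rewrite -[x](subrK y) linD // T0 // add0r.
by apply: (image_span_sub lT (S := span c)) => //; exists y.
Qed.

Lemma U0_range_has_dim u v : U0 ip u -> U0 ip v ->
  exists k, has_dim (range (fun x => u x - v x)) k.
Proof.
move=> [[lu _ _] [E1 [_ [n1 [b1 [_ _ b1s]]] fu]]] [[lv _ _] [E2 [_ [n2 [b2 [_ _ b2s]]] fv]]].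
have uv0 x : orth ip (span (fcat b1 b2)) x -> u x - v x = 0.
  move=> ox.
  have o1 : orth ip E1 x.
    move=> y /b1s b1y; apply: ox; rewrite -[y]addr0.
    exact: span_fcat b1y (subspace0 (span_subspace b2)).
  have o2 : orth ip E2 x.
    move=> y /b2s b2y; apply: ox; rewrite -[y]add0r.
    exact: span_fcat (subspace0 (span_subspace b1)) b2y.
  by rewrite fu // fv // subrr.
by have [k _ dk] := range_has_dim_span (lin_diff lu lv) uv0; exists k.
Qed.

Lemma U0_dist_eq0 u v : U0 ip u -> U0 ip v -> (dist u v = 0%N <-> u = v).
Proof.
move=> hu hv; have [k dk] := U0_range_has_dim hu hv; rewrite /dist /op_rank (sdim_eq dk).
split=> [k0|uv]; move: dk; rewrite ?k0 -?uv => dk.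
  by apply: funext => x; apply/subr0_eq; apply: (has_dim0_eq0 dk); exists x.
by apply: (has_dim_uniq dk); apply: has_dim0 => _ [x _ <-]; rewrite subrr.
Qed.

Lemma U0_dist_triangle u v w : U0 ip u -> U0 ip v -> U0 ip w ->
  (dist u w <= dist u v + dist v w)%N.
Proof.
move=> hu hv hw; have [k1 d1] := U0_range_has_dim hu hv.
have [k2 d2] := U0_range_has_dim hv hw; have [k3 d3] := U0_range_has_dim hu hw.
rewrite /dist /op_rank (sdim_eq d1) (sdim_eq d2) (sdim_eq d3).
case: d1 d2 => [b1 [_ _ s1]] [b2 [_ _ s2]].
have uw : range (fun x => u x - w x) `<=` span (fcat b1 b2).
  move=> _ [x _ <-]; have -> : u x - w x = (u x - v x) + (v x - w x) by rewrite addrA subrK.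
  by apply: span_fcat; [apply: s1|apply: s2]; exists x.
have luw : lin (fun x => u x - w x).
  by case: hu hw => [[lu _ _] _] [[lw _ _] _]; apply: lin_diff.
have [k le_k dk] := has_dim_sub_span (range_subspace luw) uw.
by rewrite (has_dim_uniq d3 dk).
Qed.


(** * The operator pi_{E,F}(u) *)

Section Projection.
Variables (E F : set V) (u : V -> V).
Hypotheses (sE : subspace E) (fE : findim E) (sF : subspace F) (fF : findim F).
Hypotheses (FE : F `<=` E) (uu : unitary ip u) (fu : fixes u (orth ip E)).

Local Notation oF := (orth ip F).
Let dE := findim_has_dim fE.
Let dF := findim_has_dim fF.
Let lu : lin u. Proof. by case: uu. Qed.
Let uip x y : ip (u x) (u y) = ip x y. Proof. by case: uu. Qed.
Let lum : lin (fun x => u x - x) := lin_diff lu (@lin_id _ V).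
Let soF : subspace oF := orth_subspace F.
Let uE x : E x -> E (u x) := unitary_orth_stable sE dE uu fu.
Let oEF : orth ip E `<=` oF. Proof. by move=> x ox y /FE; apply: ox. Qed.

Let M := (fun x => u x - x) @` oF.
Let G := E `&` oF.
Let K := [set x | E x /\ oF x /\ u x = x].
Let L := E `&` orth ip K.
Let FM := [set z | exists f m, [/\ F f, M m & z = f + m]].

Let sM : subspace M := image_subspace lum soF.
Let sG : subspace G := subspaceI sE soF.
Let sL : subspace L := subspaceI sE (orth_subspace K).

Lemma um1_orthE x e : orth ip E (x - e) -> u x - x = u e - e.
Proof.
move=> oxe; rewrite -[x in u x](subrK e) linD // fu //.
by rewrite addrAC [x - e - x]addrAC subrr sub0r addrC.
Qed.

Lemma um1_E x : E (u x - x).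
Proof.
have [e Ee oxe] := orth_proj sE dE x.
by rewrite (um1_orthE oxe); apply: subspaceB => //; apply: uE.
Qed.

(* [u g = g + y] with [y] orthogonal to [g], and [u] is isometric. *)
Lemma F_M_eq0 y : F y -> M y -> y = 0.
Proof.
move=> Fy [g og gy]; have ug : u g = g + y by rewrite -gy subrKC.
have := uip g g; rewrite ug ipDl !ipDr (og _ Fy) (ip_eq0C (og _ Fy)) add0r addr0 => h.
by apply: ipd; apply: (@addrI _ (ip g g)); rewrite addr0.
Qed.

Lemma K_kernel : K = G `&` [set x | u x - x = 0].
Proof.
apply/seteqP; split => x /=; first by move=> [Ex [ox ->]]; rewrite subrr.
by move=> [[Ex ox] /subr0_eq ux].
Qed.

Lemma M_image_G : M = (fun x => u x - x) @` G.
Proof.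
apply/seteqP; split => _ [x ox <-]; last by exists x => //; case: ox.
have [e Ee oxe] := orth_proj sE dE x; exists e; last by rewrite (um1_orthE oxe).
by split => //; rewrite -[e](subKr x); apply: (subspaceB soF) => //; apply: oEF.
Qed.

Let sK : subspace K.
Proof. by rewrite K_kernel; apply: subspaceI sG (kernel_subspace lum). Qed.

Lemma dim_K : exists nK, has_dim K nK.
Proof. by have [nK _ dK] := has_dim_sub sK (fun x (Kx : K x) => Kx.1) dE; exists nK. Qed.

Lemma dim_M : exists nM, has_dim M nM.
Proof.
have ME : M `<=` E by move=> _ [x _ <-]; apply: um1_E.
by have [nM _ dM] := has_dim_sub sM ME dE; exists nM.
Qed.

Lemma dim_G : exists2 nG, has_dim G nG & sdim E = (sdim F + nG)%N.
Proof. exact: has_dim_orth_compl. Qed.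

Lemma dim_G_rank_nullity nK nM : has_dim K nK -> has_dim M nM -> has_dim G (nK + nM).
Proof. by rewrite K_kernel M_image_G; apply: has_dim_rank_nullity. Qed.

Lemma dim_L nK : has_dim K nK -> exists2 nL, has_dim L nL & sdim E = (nK + nL)%N.
Proof. by apply: has_dim_orth_compl => // x []. Qed.

Let F_L : F `<=` L.
Proof. by move=> f Ff; split=> [|k [_ [ok _]]]; [apply: FE|apply: ip_eq0C; apply: ok]. Qed.

Let M_L : M `<=` L.
Proof.
move=> _ [g _ <-]; split=> [|k [_ [_ uk]]]; first exact: um1_E.
by rewrite ipBl -{1}uk uip subrr.
Qed.

Let uF_L f : F f -> L (u f).
Proof.
move=> Ff; split=> [|k [_ [ok uk]]]; first by apply: uE; apply: FE.
by rewrite -uk uip; apply: ip_eq0C; apply: ok.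
Qed.

Lemma L_eq_FM : L = FM.
Proof.
have [nK dK] := dim_K; have [nM dM] := dim_M.
have [nG dG eG] := dim_G; have [nL dL eL] := dim_L dK.
have nGE := has_dim_uniq dG (dim_G_rank_nullity dK dM).
have sFM : subspace FM.
  split; first by exists 0, 0; split; rewrite ?addr0 //; apply: subspace0.
  move=> a _ _ [f1 [m1 [Ff1 Mm1 ->]]] [f2 [m2 [Ff2 Mm2 ->]]].
  exists (a *: f1 + f2), (a *: m1 + m2); rewrite scalerDr addrACA.
  by split=> //; [case: sF => _; apply|case: sM => _; apply].
have dFM : has_dim FM nL.
  have -> : nL = (sdim F + nM)%N by apply/eqP; rewrite -(eqn_add2l nK) -eL eG nGE addnCA.
  apply: (has_dim_dsum sF sM) F_M_eq0 dF dM.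
  - by move=> f Ff; exists f, 0; split; rewrite ?addr0 //; apply: subspace0.
  - by move=> m Mm; exists 0, m; split; rewrite ?add0r //; apply: subspace0.
  - by move=> _ [f [m [Ff Mm ->]]]; exists f, m.
apply: esym; apply: subspace_eq_dim sFM _ dL dFM.
by move=> _ [f [m [Ff Mm ->]]]; apply: subspaceD sL (F_L Ff) (M_L Mm).
Qed.

Lemma u_F_decomp f : F f -> exists2 a, F a & M (u f - a).
Proof.
move/uF_L; rewrite L_eq_FM => -[a [m [Fa Mm ->]]].
by exists a => //; rewrite addrC addKr.
Qed.

(* The graph of [pi_{E,F}(u)]: [x = f + (x - f)] along [F] and [oF], and [f] is
   replaced by the [F]-component [a] of [u f] in [F + M]. *)
Let pi_rel x z := exists f a, [/\ F f, oF (x - f), F a, M (u f - a) & z = a + (x - f)].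

Lemma pi_rel_ex x : exists z, pi_rel x z.
Proof.
have [f Ff oxf] := orth_proj sF dF x; have [a Fa Ma] := u_F_decomp Ff.
by exists (a + (x - f)), f, a.
Qed.

Lemma pi_rel_uniq x z1 z2 : pi_rel x z1 -> pi_rel x z2 -> z1 = z2.
Proof.
move=> [f1 [a1 [Ff1 o1 Fa1 M1 ->]]] [f2 [a2 [Ff2 o2 Fa2 M2 ->]]].
have f12 : f1 = f2.
  apply/subr0_eq; apply: (orth_meet_eq0 (S := F)); first exact: (subspaceB sF).
  have -> : f1 - f2 = (x - f2) - (x - f1) by rewrite opprB [RHS]addrC subrKA.
  exact: (subspaceB soF).
subst f2; congr (_ + _); apply/subr0_eq; apply: F_M_eq0; first exact: (subspaceB sF).
have -> : a1 - a2 = (u f1 - a2) - (u f1 - a1) by rewrite opprB [RHS]addrC subrKA.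
exact: (subspaceB sM).
Qed.

Let q x := xget 0 (pi_rel x).

Lemma q_rel x : pi_rel x (q x).
Proof. exact: xgetPex (pi_rel_ex x). Qed.

Lemma q_eq x z : pi_rel x z -> q x = z.
Proof. exact: pi_rel_uniq (q_rel x). Qed.

Lemma q_lin : lin q.
Proof.
move=> a x y; apply: q_eq.
have [f1 [a1 [Ff1 o1 Fa1 M1 ->]]] := q_rel x.
have [f2 [a2 [Ff2 o2 Fa2 M2 ->]]] := q_rel y.
exists (a *: f1 + f2), (a *: a1 + a2); split.
- by case: sF => _; apply.
- have -> : a *: x + y - (a *: f1 + f2) = a *: (x - f1) + (y - f2).
    by rewrite scalerBr opprD addrACA.
  by case: soF => _; apply.
- by case: sF => _; apply.
- have -> : u (a *: f1 + f2) - (a *: a1 + a2) = a *: (u f1 - a1) + (u f2 - a2).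
    by rewrite lu scalerBr opprD addrACA.
  by case: sM => _; apply.
- by rewrite scalerDr scalerBr addrACA; congr (_ + _); rewrite opprD addrACA.
Qed.

Lemma q_fix : fixes q oF.
Proof.
move=> x ox; apply: q_eq; exists 0, 0.
by split; rewrite ?subr0 ?add0r ?lin0 //; apply: subspace0.
Qed.

Lemma q_F x : F x -> F (q x).
Proof.
move=> Fx; have [f [a [Ff oxf Fa _ ->]]] := q_rel x.
by rewrite (orth_meet_eq0 (subspaceB sF Fx Ff) oxf) addr0.
Qed.

Lemma q_range x : M (u x - q x).
Proof.
have [f [a [Ff oxf Fa Ma ->]]] := q_rel x.
have -> : u x - (a + (x - f)) = (u f - a) + (u (x - f) - (x - f)).
  rewrite (linB lu) opprD addrA [RHS]addrA; congr (_ - _).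
  by rewrite [RHS]addrC [RHS]addrA subrK.
by apply: subspaceD => //; exists (x - f).
Qed.

Lemma q_ip x y : ip (q x) (q y) = ip x y.
Proof.
have [f1 [a1 [Ff1 or1 Fa1 [g1 og1 eg1] ->]]] := q_rel x.
have [f2 [a2 [Ff2 or2 Fa2 [g2 og2 eg2] ->]]] := q_rel y.
have a12 := ip_isometry_correction uip Ff1 Ff2 Fa1 Fa2 og1 og2 (esym eg1) (esym eg2).
rewrite -[in RHS](subrKC f1 x) -[in RHS](subrKC f2 y).
move: (x - f1) (y - f2) or1 or2 => r1 r2 or1 or2.
rewrite !ipDl !ipDr a12 (ip_eq0C (or2 _ Fa1)) (or1 _ Fa2).
by rewrite (ip_eq0C (or2 _ Ff1)) (or1 _ Ff2).
Qed.

Lemma q_surj y : exists x, q x = y.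
Proof.
case: (dF) => [b [bF bi _]].
have qbi : indep (fun i => q (b i)).
  by move=> c c0; apply: bi; apply: ipd; rewrite -q_ip (lin_sum q_lin) c0 ip0l.
have [f Ff oyf] := orth_proj sF dF y.
have [c fc] := has_dim_indep_span dF qbi (fun i => q_F (bF i)) Ff.
exists (\sum_i c i *: b i + (y - f)).
by rewrite (linD q_lin) (lin_sum q_lin) -fc q_fix // subrKC.
Qed.

Lemma is_piEF_q : is_piEF ip E F u q.
Proof.
split; [split|exact: q_fix|by move=> _ [x _ <-]; apply: q_range].
- exact: q_lin.
- exact: q_ip.
- exact: q_surj.
Qed.

Lemma is_piEF_uniq w1 w2 : is_piEF ip E F u w1 -> is_piEF ip E F u w2 -> w1 = w2.
Proof.
move=> [uw1 fw1 rw1] [uw2 fw2 rw2]; apply: funext => x.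
have [f Ff oxf] := orth_proj sF dF x.
have [[lw1 _ _] [lw2 _ _]] := (uw1, uw2).
rewrite -(subrKC f x) (linD lw1) (linD lw2) (fw1 _ oxf) (fw2 _ oxf); congr (_ + _).
apply/subr0_eq; apply: F_M_eq0.
  by apply: (subspaceB sF); apply: (unitary_orth_stable sF dF).
have -> : w1 f - w2 f = (u f - w2 f) - (u f - w1 f) by rewrite opprB [RHS]addrC subrKA.
by apply: (subspaceB sM); [apply: rw2|apply: rw1]; exists f.
Qed.

Local Notation p := (piEF ip E F u).

Lemma piEF_spec : is_piEF ip E F u p.
Proof. by apply: epsilon_spec; exists q; apply: is_piEF_q. Qed.

Lemma range_piEF : range (fun x => u x - p x) = M.
Proof.
have [_ fp rp] := piEF_spec; apply/seteqP; split => // _ [x ox <-].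
by exists x => //; rewrite fp.
Qed.

Let M_sub_range w : fixes w oF -> M `<=` range (fun x => u x - w x).
Proof. by move=> fw _ [x ox <-]; exists x => //; rewrite fw. Qed.

Lemma range_unitary_has_dim w : unitary ip w -> fixes w oF ->
  exists k, has_dim (range (fun x => u x - w x)) k.
Proof.
move=> [lw _ _] fw; case: (dE) => [b [_ _ bE]].
have uw0 x : orth ip (span b) x -> u x - w x = 0.
  move=> ox; have oEx : orth ip E x by move=> y /bE; apply: ox.
  by rewrite fu // fw ?subrr //; apply: oEF.
by have [k _ dk] := range_has_dim_span (lin_diff lu lw) uw0; exists k.
Qed.

Lemma dist_piEF_min w : unitary ip w -> fixes w oF -> (dist u p <= dist u w)%N.
Proof.
move=> uw fw; have [nM dM] := dim_M; have [k dk] := range_unitary_has_dim uw fw.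
rewrite /dist /op_rank range_piEF (sdim_eq dM) (sdim_eq dk).
exact: has_dim_sub_leq sM (M_sub_range fw) dM dk.
Qed.

Lemma dist_piEF_eq w : unitary ip w -> fixes w oF -> dist u w = dist u p -> w = p.
Proof.
move=> uw fw; have [nM dM] := dim_M; have [k dk] := range_unitary_has_dim uw fw.
rewrite /dist /op_rank range_piEF (sdim_eq dM) (sdim_eq dk) => kM.
move: dk; rewrite kM => dk.
have rw : M = range (fun x => u x - w x) := subspace_eq_dim sM (M_sub_range fw) dk dM.
by apply: is_piEF_uniq piEF_spec; split=> //; rewrite -rw => z.
Qed.

Lemma dist_piEF_dim : (dist u p)%:Z = (sdim E)%:Z - (sdim F)%:Z - (sdim K)%:Z.
Proof.
have [nK dK] := dim_K; have [nM dM] := dim_M; have [nG dG eG] := dim_G.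
rewrite /dist /op_rank range_piEF (sdim_eq dM) (sdim_eq dK) eG.
by rewrite (has_dim_uniq dG (dim_G_rank_nullity dK dM)) !PoszD; ring.
Qed.

End Projection.

End InnerProduct.

Theorem proposition2p2 (R : realType) (V : lmodType R[i]) (ip : V -> V -> R[i])
  (hH : hilbert_space ip) :
  [/\ (forall u v, U0 ip u -> U0 ip v -> findim (range (fun x => u x - v x))),
      (forall u v, U0 ip u -> U0 ip v -> (dist u v = 0%N <-> u = v)),
      (forall u v, U0 ip u -> U0 ip v -> dist u v = dist v u) &
      (forall u v w, U0 ip u -> U0 ip v -> U0 ip w ->
         (dist u w <= dist u v + dist v w)%N)] /\
  (forall (E F : set V) (u : V -> V),
     subspace E -> findim E -> subspace F -> findim F -> F `<=` E ->
     unitary ip u -> fixes u (orth ip E) ->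
     let p := piEF ip E F u in
     let K := [set x | E x /\ orth ip F x /\ u x = x] in
     [/\ unitary ip p /\ fixes p (orth ip F),
         (forall w, unitary ip w -> fixes w (orth ip F) -> (dist u p <= dist u w)%N),
         (forall w, unitary ip w -> fixes w (orth ip F) -> dist u w = dist u p -> w = p),
         range (fun x => u x - p x) = (fun x => u x - x) @` (orth ip F) &
         (((dist u p)%:Z = (sdim E)%:Z - (sdim F)%:Z - (sdim K)%:Z)%R /\
          ((forall x, K x -> x = 0) -> (dist u p)%:Z = (sdim E)%:Z - (sdim F)%:Z)%R)]).
Proof.
case: hH => ipl ips _ ipd _; split.
  split=> [u v hu hv|||].
  - by have [k dk] := U0_range_has_dim ipl ips ipd hu hv; exists k.
  - exact: U0_dist_eq0.
  - by move=> u v [[lu _ _] _] [[lv _ _] _]; apply: dist_sym.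
  - exact: U0_dist_triangle.
move=> E F u sE fE sF fF FE uu fu; cbv zeta.
have [pu pf _] : is_piEF ip E F u (piEF ip E F u) by exact: piEF_spec.
have dp := dist_piEF_dim ipl ips ipd sE fE sF fF FE uu fu.
split=> //.
- by move=> w; exact: dist_piEF_min.
- by move=> w; exact: dist_piEF_eq.
- exact: range_piEF.
- by split=> // K0; rewrite dp (sdim_eq (has_dim0 K0)) subr0.
Qed.
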